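(* Consider a system of $B$ boxes, each caching $M$ distinct contents (in an arbitrary placement) and able to serve at most $U$ concurrent unit-rate streams. The catalogue consists of a fixed finite number of classes $i\in\mathcal{I}$; class $i$ contains $\alpha_iB$ contents, each receiving requests according to an independent Poisson process of rate $\nu_i>0$; let $\alpha=\sum_i\alpha_i$. Service times are independent exponential of mean $1$, and an arriving request is accepted iff the resulting vector $\mathbf{n}$ of ongoing requests per content satisfies $\sum_{c\in\mathcal{S}}n_c\le U\,|\{b:\mathcal{S}\cap\mathcal{J}_b\neq\emptyset\}|$ for every set of contents $\mathcal{S}$ (where $\mathcal{J}_b$ is the cache of box $b$), and rejected otherwise. Let $M'=\lceil 2M/\alpha\rceil$. Then (i) more than half of the contents are replicated (cached) at most $M'$ times; and (ii) for each content replicated at most $M'$ times, the stationary loss probability of its requests is at least $E(\inf_i\nu_i,M'U)>0$, where $$E(\nu,C)=\frac{\nu^C}{C!}\Big[\sum_{n=0}^{C}\frac{\nu^n}{n!}\Big]^{-1}$$ is the Erlang function.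
   Context: The acceptance condition is equivalent (by Hall's theorem) to the existence of an assignment of all ongoing requests to boxes holding the requested content with at most $U$ requests per box. *)

From mathcomp Require Import all_boot all_order all_algebra.
Set Implicit Arguments. Unset Strict Implicit. Unset Printing Implicit Defensive.
Import Order.TTheory GRing.Theory Num.Theory.
Local Open Scope ring_scope.

Definition erlang (R : fieldType) (nu : R) (C : nat) : R :=
  (nu ^+ C / (C`!)%:R) / (\sum_(n < C.+1) nu ^+ n / (n`!)%:R).

Section Model.
Variables (Cn : finType) (B M U : nat) (J : 'I_B -> {set Cn}).

Definition admissible (n : Cn -> nat) : bool :=
  [forall S : {set Cn},
     (\sum_(c in S) n c <= U * #|[set b | S :&: J b != set0]|)%N].

(* States: vectors of ongoing requests per content.  Any admissible vector
   has n_c <= U * B, so this finite type contains all admissible states. *)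
Definition state := {ffun Cn -> 'I_(U * B).+1}.
Definition nv (x : state) : Cn -> nat := fun c => nat_of_ord (x c).
Definition adm_state (x : state) : bool := admissible (nv x).

Definition is_arrival (c : Cn) (x y : state) : bool :=
  [forall d, nv y d == (nv x d + (d == c))%N].
Definition is_departure (c : Cn) (x y : state) : bool :=
  [forall d, (nv y d + (d == c))%N == nv x d].

Definition replication (c : Cn) : nat := #|[set b | c \in J b]|.

(* M' = ceil(2M/alpha) with alpha = #|Cn| / B, i.e. ceil(2 M B / #|Cn|) *)
Definition Mprime : nat := ((2 * M * B + #|Cn| - 1) %/ #|Cn|)%N.

Variables (R : realFieldType) (I : finType) (cls : Cn -> I) (nu : I -> R).

Definition rate (x y : state) : R :=
  \sum_(c : Cn) ((if is_arrival c x y && adm_state y then nu (cls c) else 0)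
                 + (if is_departure c x y then (nv x c)%:R else 0)).

Definition stationary (pi : {ffun state -> R}) : Prop :=
  [/\ forall x, 0 <= pi x,
      \sum_x pi x = 1,
      forall x, ~~ adm_state x -> pi x = 0
    & forall x, pi x * (\sum_y rate x y) = \sum_y pi y * rate y x].

Definition blocked (c : Cn) (x : state) : bool :=
  ~~ [exists y, is_arrival c x y && adm_state y].

(* stationary loss probability of requests for c (PASTA) *)
Definition loss_prob (pi : {ffun state -> R}) (c : Cn) : R :=
  \sum_(x | blocked c x) pi x.

End Model.

(* (i) The B M cache slots hold \sum_c replication c = B M replicas, while
   the contents replicated more than M' >= 2 M B / #|Cn| times hold more than
   M' times their number of replicas; so they are fewer than half.
   (ii) For a content c replicated at most M' times, admissibility caps n_c
   at C = M' U.  Cutting the state space between the levels {n_c <= k} and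
   {n_c > k}, global balance equates the flows across the cut:
   nu q_k = (k+1) p_(k+1), where p_k is the stationary probability of n_c = k
   and q_k that of n_c = k with c not blocked.  Any such sequences supported
   on {0..C} have blocking mass \sum_k (p_k - q_k) >= E(nu, C), with equality
   for the Erlang loss system; finally E(nu, C) is increasing in nu. *)

From mathcomp Require Import all_boot all_order all_algebra ring zify.
Import Order.TTheory GRing.Theory Num.Theory.
Local Open Scope ring_scope.
Set Implicit Arguments. Unset Strict Implicit. Unset Printing Implicit Defensive.

Lemma sum_by_parts (R : comNzRingType) (a r : nat -> R) n :
  \sum_(0 <= k < n.+1) a k * r k =
  \sum_(0 <= j < n.+1) (\sum_(0 <= k < j.+1) a k) * (r j - r j.+1)
  + (\sum_(0 <= k < n.+1) a k) * r n.+1.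
Proof.
elim: n => [|n IHn]; first by rewrite !big_nat1; ring.
rewrite big_nat_recr //= IHn [in RHS]big_nat_recr //=.
by rewrite [\sum_(0 <= k < n.+2) a k]big_nat_recr //=; ring.
Qed.

Section ErlangFunction.
Variables (R : realFieldType) (nu : R).
Hypothesis nu_gt0 : 0 < nu.

Definition erlang_term (k : nat) : R := nu ^+ k / (k`!)%:R.
Definition erlang_sum (j : nat) : R := \sum_(0 <= k < j.+1) erlang_term k.

Lemma erlangE C : erlang nu C = erlang_term C / erlang_sum C.
Proof. by rewrite /erlang /erlang_sum big_mkord. Qed.

Lemma erlang_term_gt0 k : 0 < erlang_term k.
Proof. by rewrite divr_gt0 ?exprn_gt0 // ltr0n fact_gt0. Qed.

Lemma erlang_termS k : erlang_term k.+1 * k.+1%:R = nu * erlang_term k.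
Proof.
rewrite /erlang_term factS natrM exprS.
have kS_neq0 : (k.+1%:R : R) != 0 by rewrite pnatr_eq0.
have fact_neq0 : ((k`!)%:R : R) != 0 by rewrite pnatr_eq0 -lt0n fact_gt0.
by field; rewrite fact_neq0 /= addrC natr1.
Qed.

Lemma erlang_sum_gt0 j : 0 < erlang_sum j.
Proof.
rewrite /erlang_sum big_nat_recl // ltr_wpDr ?erlang_term_gt0 //.
by rewrite sumr_ge0 // => k _; rewrite ltW ?erlang_term_gt0.
Qed.

Lemma erlang_gt0 C : 0 < erlang nu C.
Proof. by rewrite erlangE divr_gt0 ?erlang_term_gt0 ?erlang_sum_gt0. Qed.

Lemma erlang_sum_step j : nu * erlang_sum j <= j.+1%:R * erlang_sum j.+1.
Proof.
rewrite [erlang_sum j.+1]/erlang_sum big_nat_recl // mulrDr ler_wpDl //.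
  by rewrite mulr_ge0 // ltW ?erlang_term_gt0.
rewrite /erlang_sum !big_distrr /=; apply: ler_sum_nat => k /andP[_ lt_kj].
rewrite -erlang_termS [X in _ <= X]mulrC ler_wpM2l ?ler_nat //.
exact/ltW/erlang_term_gt0.
Qed.

Lemma erlang_decreasing j : erlang nu j.+1 <= erlang nu j.
Proof.
rewrite !erlangE ler_pdivrMr ?erlang_sum_gt0 // mulrAC.
rewrite ler_pdivlMr ?erlang_sum_gt0 // -(ler_pM2r (ltr0Sn _ j)).
have -> : erlang_term j.+1 * erlang_sum j * j.+1%:R
          = erlang_term j * (nu * erlang_sum j) by rewrite mulrAC erlang_termS; ring.
have -> : erlang_term j * erlang_sum j.+1 * j.+1%:R
          = erlang_term j * (j.+1%:R * erlang_sum j.+1) by ring.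
by rewrite ler_wpM2l ?erlang_sum_step // ltW ?erlang_term_gt0.
Qed.

Lemma erlang_term_sum_cross j C : (j <= C)%N ->
  erlang_term C * erlang_sum j <= erlang_sum C * erlang_term j.
Proof.
move=> le_jC.
have : erlang nu C <= erlang nu j.
  apply: (homo_leq (r := fun a b => b <= a)) le_jC => //.
    by move=> y x z le_yx le_zy; apply: le_trans le_zy le_yx.
  exact: erlang_decreasing.
rewrite !erlangE ler_pdivrMr ?erlang_sum_gt0 // mulrAC.
by rewrite ler_pdivlMr ?erlang_sum_gt0 // [X in _ <= X]mulrC.
Qed.

(* Writing [p k = erlang_term k * r k], the flux equations make [r]
   nonincreasing and the blocking mass [p k - q k] equals
   [erlang_term k * (r k - r k.+1)]; summation by parts rewrites the total
   mass as [\sum_j erlang_sum j * (r j - r j.+1)], and the terms are compared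
   with [erlang_term_sum_cross]. *)
Lemma erlang_le_blocking C (p q : nat -> R) :
  (forall k, 0 <= q k <= p k) ->
  (forall k, nu * q k = k.+1%:R * p k.+1) ->
  p C.+1 = 0 ->
  \sum_(0 <= k < C.+1) p k = 1 ->
  erlang nu C <= \sum_(0 <= k < C.+1) (p k - q k).
Proof.
move=> q_bounds flux pC1 p_sum1.
have term_neq0 k : erlang_term k != 0 by rewrite gt_eqF ?erlang_term_gt0.
pose r k := p k / erlang_term k.
have pE k : p k = erlang_term k * r k by rewrite mulrC divfK.
have rS k : r k.+1 = q k / erlang_term k.
  apply/eqP; rewrite eqr_div //; apply/eqP.
  have kS_neq0 : (k.+1%:R : R) != 0 by rewrite pnatr_eq0.
  apply: (mulIf kS_neq0).
  rewrite -[RHS]mulrA erlang_termS [RHS]mulrCA [RHS]mulrA flux.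
  by rewrite mulrAC [_ * k.+1%:R]mulrC.
pose d j := r j - r j.+1.
have d_ge0 j : 0 <= d j.
  rewrite subr_ge0 rS ler_wpM2r ?invr_ge0 ?(ltW (erlang_term_gt0 j)) //.
  by case/andP: (q_bounds j).
have blockingE j : p j - q j = erlang_term j * d j.
  by rewrite /d [p j]pE rS; field.
have massE : 1 = \sum_(0 <= j < C.+1) erlang_sum j * d j.
  rewrite -p_sum1 (eq_bigr _ (fun k _ => pE k)) sum_by_parts /r pC1.
  by rewrite mul0r mulr0 addr0.
rewrite (eq_bigr _ (fun j _ => blockingE j)) erlangE.
rewrite ler_pdivrMr ?erlang_sum_gt0 // -[erlang_term C]mulr1 massE.
rewrite big_distrr big_distrl /=; apply: ler_sum_nat => j /andP[_ le_jC].
rewrite mulrA [X in _ <= X]mulrAC [_ * erlang_sum C]mulrC.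
by rewrite ler_wpM2r ?erlang_term_sum_cross.
Qed.

End ErlangFunction.

Lemma erlang_le_rate (R : realFieldType) (nu0 nu : R) C :
  0 < nu0 -> nu0 <= nu -> erlang nu0 C <= erlang nu C.
Proof.
move=> nu0_gt0 le_nu0_nu; have nu_gt0 := lt_le_trans nu0_gt0 le_nu0_nu.
rewrite !erlangE ler_pdivrMr ?erlang_sum_gt0 // mulrAC.
rewrite ler_pdivlMr ?erlang_sum_gt0 // /erlang_sum !big_distrr /=.
apply: ler_sum_nat => k /andP[_]; rewrite ltnS => le_kC; rewrite /erlang_term.
pose w : R := (C`!)%:R^-1 * (k`!)%:R^-1.
have w_ge0 : 0 <= w by rewrite mulr_ge0 // invr_ge0.
have -> : nu0 ^+ C / (C`!)%:R * (nu ^+ k / (k`!)%:R)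
          = nu0 ^+ k * nu ^+ k * nu0 ^+ (C - k) * w.
  by rewrite /w -{1}(subnKC le_kC) exprD; ring.
have -> : nu ^+ C / (C`!)%:R * (nu0 ^+ k / (k`!)%:R)
          = nu0 ^+ k * nu ^+ k * nu ^+ (C - k) * w.
  by rewrite /w -{1}(subnKC le_kC) exprD; ring.
rewrite ler_wpM2r //; apply: ler_wpM2l.
  by rewrite mulr_ge0 // exprn_ge0 // ltW.
by rewrite lerXn2r // nnegrE ltW.
Qed.

Lemma balance_cut (R : nzRingType) (T : finType) (rt : T -> T -> R)
    (pi : T -> R) (A : pred T) :
  (forall x, pi x * \sum_y rt x y = \sum_y pi y * rt y x) ->
  \sum_(x | A x) \sum_(y | ~~ A y) pi x * rt x y =
  \sum_(x | A x) \sum_(y | ~~ A y) pi y * rt y x.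
Proof.
move=> balance.
have total : \sum_(x | A x) \sum_y pi x * rt x y
             = \sum_(x | A x) \sum_y pi y * rt y x.
  by apply: eq_bigr => x _; rewrite -big_distrr /= balance.
rewrite !(eq_bigr _ (fun x _ => bigID A _ _)) !big_split /= in total.
by move: total; rewrite [X in X + _ = _ -> _]exchange_big => /addrI.
Qed.

Lemma sum_if_unique (R : nmodType) (T : finType) (P : pred T) (v : R) :
  {in P &, forall y y', y = y'} ->
  \sum_y (if P y then v else 0) = if [exists y, P y] then v else 0.
Proof.
move=> P_uniq; case: existsP => [[y0 Py0]|noP].
  rewrite (bigD1 y0) //= Py0 big1 ?addr0 // => y ne_y_y0.
  by case: ifP => // Py; rewrite (P_uniq _ _ Py Py0) eqxx in ne_y_y0.
by apply: big1 => y _; case: ifP => // Py; case: noP; exists y.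
Qed.

Lemma sum_mul_if (R : comPzSemiRingType) (T : finType) (A P : pred T)
    (f : T -> R) (v : R) :
  (forall x, P x -> A x) ->
  \sum_(x | A x) f x * (if P x then v else 0) = v * \sum_(x | P x) f x.
Proof.
move=> sub_PA; rewrite big_distrr /= big_mkcond [RHS]big_mkcond /=.
apply: eq_bigr => x _; case Px: (P x); first by rewrite sub_PA // mulrC.
by case: (A x); rewrite ?mulr0.
Qed.

Section LevelFlux.
Variables (Cn I : finType) (B U : nat) (J : 'I_B -> {set Cn}).
Variables (R : realFieldType) (cls : Cn -> I) (nu : I -> R).
Local Notation state := (state Cn B U).
Local Notation rate := (rate J cls nu).

Lemma arrival_nv c (x y : state) :
  is_arrival c x y -> forall d, nv y d = (nv x d + (d == c))%N.
Proof. by move=> /forallP arr d; apply/eqP; apply: arr. Qed.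

Lemma departure_nv c (x y : state) :
  is_departure c x y -> forall d, (nv y d + (d == c))%N = nv x d.
Proof. by move=> /forallP dep d; apply/eqP; apply: dep. Qed.

Lemma arrival_uniq c (x y y' : state) :
  is_arrival c x y -> is_arrival c x y' -> y = y'.
Proof.
move=> arr arr'; apply/ffunP => d; apply: val_inj.
by change (nv y d = nv y' d); rewrite (arrival_nv arr) (arrival_nv arr').
Qed.

Lemma departure_uniq c (y x x' : state) :
  is_departure c y x -> is_departure c y x' -> x = x'.
Proof.
move=> dep dep'; apply/ffunP => d; apply: val_inj.
change (nv x d = nv x' d); apply/eqP; rewrite -(eqn_add2r (d == c)).
by rewrite (departure_nv dep) (departure_nv dep').
Qed.

Lemma departure_exists c (y : state) :
  (0 < nv y c)%N -> exists x : state, is_departure c y x.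
Proof.
move=> y_c_gt0; exists [ffun d => if d == c then inord (nv y c).-1 else y d].
apply/forallP => d; rewrite /nv ffunE.
case: (eqVneq d c) => [->|_] /=; last by rewrite addn0.
have pred_bound : ((nv y c).-1 < (U * B).+1)%N.
  exact: leq_ltn_trans (leq_pred _) (ltn_ord (y c)).
by rewrite inordK // addn1 prednK.
Qed.

Lemma rate_level_change c (x y : state) : nv x c != nv y c ->
  rate x y = (if is_arrival c x y && adm_state J y then nu (cls c) else 0)
             + (if is_departure c x y then (nv x c)%:R else 0).
Proof.
move=> /eqP ne_xy; rewrite /rate (bigD1 c) //= big1 ?addr0 // => d ne_dc.
case: ifP => [/andP[arr _]|_].
  by have := arrival_nv arr c; rewrite eq_sym (negbTE ne_dc) addn0 => /esym/ne_xy.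
case: ifP => [dep|_]; last by rewrite addr0.
by have := departure_nv dep c; rewrite eq_sym (negbTE ne_dc) addn0 => /esym/ne_xy.
Qed.

Lemma rate_level_up c k (x y : state) : (nv x c <= k < nv y c)%N ->
  rate x y = if is_arrival c x y && adm_state J y then nu (cls c) else 0.
Proof.
case/andP=> x_le y_gt; rewrite (@rate_level_change c); last by apply/eqP; lia.
suff -> : is_departure c x y = false by rewrite addr0.
by apply/negP => dep; have := departure_nv dep c; rewrite eqxx; lia.
Qed.

Lemma rate_level_down c k (x y : state) : (nv x c <= k < nv y c)%N ->
  rate y x = if is_departure c y x then (nv y c)%:R else 0.
Proof.
case/andP=> x_le y_gt; rewrite (@rate_level_change c); last by apply/eqP; lia.
suff -> : is_arrival c y x && adm_state J x = false by rewrite add0r.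
by apply/negP => /andP[arr _]; have := arrival_nv arr c; rewrite eqxx; lia.
Qed.

Definition level_prob (pi : {ffun state -> R}) c k : R :=
  \sum_(x | nv x c == k) pi x.
Definition level_accept_prob (pi : {ffun state -> R}) c k : R :=
  \sum_(x | (nv x c == k) && ~~ blocked J c x) pi x.

Lemma cut_outflow (pi : {ffun state -> R}) c k :
  \sum_(x | (nv x c <= k)%N) \sum_(y | ~~ (nv y c <= k)%N) pi x * rate x y
  = nu (cls c) * level_accept_prob pi c k.
Proof.
rewrite -(@sum_mul_if _ _ (fun x => nv x c <= k)%N); last first.
  by move=> x /andP[/eqP -> _].
apply: eq_bigr => x x_le; rewrite -big_distrr /=; congr (_ * _).
transitivity (\sum_y if nv x c == k then
  (if is_arrival c x y && adm_state J y then nu (cls c) else 0) else 0).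
  rewrite big_mkcond; apply: eq_bigr => y _ /=.
  case: (leqP (nv y c) k) => [y_le|y_gt] /=.
    case: eqP => //= x_eq; case: ifP => // /andP[arr _].
    by have := arrival_nv arr c; rewrite eqxx; lia.
  rewrite (@rate_level_up c k) ?x_le //.
  case: eqP => //= ne; case: ifP => // /andP[arr _].
  by have := arrival_nv arr c; rewrite eqxx; lia.
case: eqP => _ /=; last by rewrite big1.
rewrite sum_if_unique; last first.
  by move=> y y' /andP[arr _] /andP[arr' _]; apply: arrival_uniq arr arr'.
by rewrite /blocked negbK.
Qed.

Lemma cut_inflow (pi : {ffun state -> R}) c k :
  \sum_(x | (nv x c <= k)%N) \sum_(y | ~~ (nv y c <= k)%N) pi y * rate y x
  = k.+1%:R * level_prob pi c k.+1.
Proof.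
rewrite exchange_big /= -(@sum_mul_if _ _ (fun y => ~~ (nv y c <= k))%N); last first.
  by move=> y /eqP ->; rewrite -ltnNge.
apply: eq_bigr => y; rewrite -ltnNge => y_gt; rewrite -big_distrr /=.
congr (_ * _).
transitivity (\sum_x if nv y c == k.+1 then
  (if is_departure c y x then (nv y c)%:R else 0) else 0 : R).
  rewrite big_mkcond; apply: eq_bigr => x _ /=.
  case: (leqP (nv x c) k) => [x_le|x_gt] /=.
    rewrite (@rate_level_down c k) ?x_le //.
    case: eqP => //= ne; case: ifP => // dep.
    by have := departure_nv dep c; rewrite eqxx; lia.
  case: eqP => //= y_eq; case: ifP => // dep.
  by have := departure_nv dep c; rewrite eqxx; lia.
case: eqP => y_eq /=; last by rewrite big1.
rewrite sum_if_unique; last by move=> x x'; apply: departure_uniq.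
case: existsP => [_|]; first by rewrite y_eq.
by case; apply: departure_exists; rewrite y_eq.
Qed.

Lemma level_flux (pi : {ffun state -> R}) c k :
  (forall x, pi x * \sum_y rate x y = \sum_y pi y * rate y x) ->
  nu (cls c) * level_accept_prob pi c k = k.+1%:R * level_prob pi c k.+1.
Proof.
move=> balance; rewrite -cut_outflow -cut_inflow.
exact: (balance_cut (fun x => nv x c <= k)%N balance).
Qed.

End LevelFlux.

Section Replication.
Variables (Cn : finType) (B M : nat) (J : 'I_B -> {set Cn}).
Hypothesis card_J : forall b, #|J b| = M.

Lemma sum_replication : (\sum_c replication J c)%N = (B * M)%N.
Proof.
transitivity (\sum_c \sum_b (c \in J b : nat))%N.
  apply: eq_bigr => c _; rewrite /replication -sum1_card big_mkcond /=.
  by apply: eq_bigr => b _; rewrite inE; case: (c \in J b).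
rewrite exchange_big /= (eq_bigr (fun _ => M)) ?sum_nat_const ?card_ord //.
move=> b _; rewrite -(card_J b) -sum1_card [RHS]big_mkcond /=.
by apply: eq_bigr => c _; case: (c \in J b).
Qed.

Lemma Mprime_ceil : (0 < #|Cn|)%N -> (2 * M * B <= Mprime Cn B M * #|Cn|)%N.
Proof.
move=> Cn_gt0; rewrite /Mprime.
have := divn_eq (2 * M * B + #|Cn| - 1) #|Cn|.
have := ltn_pmod (2 * M * B + #|Cn| - 1) Cn_gt0; lia.
Qed.

Lemma few_replicas_majority : (0 < #|Cn|)%N ->
  (#|Cn| < 2 * #|[set c | (replication J c <= Mprime Cn B M)%N]|)%N.
Proof.
move=> Cn_gt0; set M' := Mprime Cn B M; set S := [set c | _].
have many_le : (M'.+1 * #|~: S| <= B * M)%N.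
  rewrite -sum_replication (bigID (mem (~: S))) /= -sum1_card big_distrr /=.
  apply: leq_trans (leq_addr _ _); apply: leq_sum => c.
  by rewrite !inE -ltnNge muln1.
have := cardsC S; have := Mprime_ceil Cn_gt0; rewrite -/M'; nia.
Qed.

End Replication.

Lemma admissible_le_replication (Cn : finType) (B U : nat)
    (J : 'I_B -> {set Cn}) (x : state Cn B U) c :
  adm_state J x -> (nv x c <= U * replication J c)%N.
Proof.
move=> /forallP /(_ [set c]); rewrite big_set1.
suff -> : [set b | [set c] :&: J b != set0] = [set b | c \in J b] by [].
apply/setP => b; rewrite !inE; apply/set0Pn/idP => [[d]|c_in].
  by rewrite !inE => /andP[/eqP -> ->].
by exists c; rewrite !inE eqxx c_in.
Qed.

Lemma sum_by_level (Cn : finType) (B U : nat) (R : nmodType)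
    (f : state Cn B U -> R) c K :
  (forall x, (K <= nv x c)%N -> f x = 0) ->
  \sum_x f x = \sum_(0 <= k < K) \sum_(x | nv x c == k) f x.
Proof.
move=> f_high.
rewrite (eq_bigr _ (fun k _ => big_mkcond _ _)) exchange_big /=.
apply: eq_bigr => x _; case: (ltnP (nv x c) K) => [x_low|x_high].
  rewrite (bigD1_seq (nv x c)) ?mem_index_iota ?iota_uniq //= eqxx big1 ?addr0 //.
  by move=> k ne_k; rewrite eq_sym (negbTE ne_k).
by rewrite f_high // big1 // => k _; case: ifP.
Qed.

Theorem lemma1 (R : realFieldType) (Cn I : finType) (B M U : nat)
    (J : 'I_B -> {set Cn}) (cls : Cn -> I) (nu : I -> R) :
  (0 < B)%N -> (0 < #|Cn|)%N ->
  (forall b, #|J b| = M) ->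
  (forall i, 0 < nu i) ->
  let M' := Mprime Cn B M in
  (#|Cn| < 2 * #|[set c | (replication J c <= M')%N]|)%N /\
  (forall pi : {ffun state Cn B U -> R},
     stationary J cls nu pi ->
     forall c : Cn, (replication J c <= M')%N ->
       let numin := \big[Num.min/nu (cls c)]_(i : I) nu i in
       0 < erlang numin (M' * U) /\
       erlang numin (M' * U) <= loss_prob J pi c).
Proof.
move=> _ Cn_gt0 card_J nu_gt0 M'; split; first exact: few_replicas_majority.
move=> pi [pi_ge0 pi_sum1 pi_adm balance] c rep_c numin; set C := (M' * U)%N.
have numin_gt0 : 0 < numin by apply: lt_bigmin => // i _.
split; first exact: erlang_gt0.
have pi_high x : (C < nv x c)%N -> pi x = 0.
  move=> x_high; apply: pi_adm; apply/negP => /admissible_le_replication.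
  by move/(_ c); have := leq_mul rep_c (leqnn U); rewrite mulnC -/C; lia.
have blockingE k : level_prob pi c k - level_accept_prob J pi c k =
                   \sum_(x | (nv x c == k) && blocked J c x) pi x.
  by rewrite /level_prob (bigID (blocked J c)) /= addrK.
have lossE : loss_prob J pi c = \sum_(0 <= k < C.+1)
               (level_prob pi c k - level_accept_prob J pi c k).
  rewrite /loss_prob big_mkcond (sum_by_level (c := c) (K := C.+1)); last first.
    by move=> x x_high; rewrite pi_high //; case: ifP.
  by apply: eq_bigr => k _; rewrite blockingE big_mkcondr.
have numin_le : numin <= nu (cls c) by apply: bigmin_le_id.
rewrite lossE; apply: le_trans (erlang_le_rate _ numin_gt0 numin_le) _.
apply: erlang_le_blocking.
- exact: nu_gt0.
- move=> k; rewrite sumr_ge0 //= -subr_ge0 blockingE sumr_ge0 //.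
- by move=> k; apply: level_flux c k balance.
- by apply: big1 => x /eqP x_c; apply: pi_high; rewrite x_c.
- by rewrite -pi_sum1 (sum_by_level (c := c) (K := C.+1)).
Qed.
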